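(* Let $\mathbb{K}$ be an algebraically closed field with $\operatorname{char}(\mathbb{K})\neq 2$. Let \[ A=\frac{\mathbb{K}\langle x_1,x_2,x_3,x_4\rangle}{\langle g_1,\ldots,g_6\rangle}, \] where \[ g_1=x_1x_2-x_2x_1,\quad g_2=x_2x_3-x_3x_2,\quad g_3=x_1x_3-x_3x_1, \] \[ g_4=x_1x_4-x_4x_1-x_1^2+x_2x_3,\quad g_5=x_2x_4-x_4x_2,\quad g_6=x_3x_4-x_4x_3. \] Then the point scheme of $A$ is $Q\cup L\subset\mathbb{P}^3$, where $Q=\mathcal{V}(x_1^2-x_2x_3)$ and $L=\mathcal{V}(x_2,x_3)$; in particular the line $L$ is tangent to the quadric $Q$ at a singular point of $Q$.
   Context: Point scheme: for a quadratic algebra $A=\mathbb{K}\langle x_1,\dots,x_4\rangle/\langle g_1,\dots,g_6\rangle$ with each $g_i=\sum_{j,k}c_{ijk}x_jx_k$ homogeneous of degree 2, let $D$ be the $6\times 4$ matrix with entries $D_{ik}=\sum_j c_{ijk}x_j$ (linear forms in $x_1,\dots,x_4$), so that $g_i(\alpha,\beta):=\sum_{j,k}c_{ijk}\alpha_j\beta_k=(D(\alpha)\beta)_i$ for $(\alpha,\beta)\in\mathbb{P}^3\times\mathbb{P}^3$. The point scheme of $A$ is the subscheme of $\mathbb{P}^3$ (homogeneous coordinates $x_1,\dots,x_4$) defined by the vanishing of all $4\times 4$ minors of $D$; its points are the $\alpha\in\mathbb{P}^3$ for which there exists $\beta\in\mathbb{P}^3$ with $g_i(\alpha,\beta)=0$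 for all $i$. For homogeneous polynomials $f_1,\dots,f_r$, $\mathcal{V}(f_1,\dots,f_r)$ denotes their zero locus (subscheme) in $\mathbb{P}^3$. *)

From HB Require Import structures.
From mathcomp Require Import all_boot all_order all_algebra.
From mathcomp Require Import mpoly.
Set Implicit Arguments.
Unset Strict Implicit.
Unset Printing Implicit Defensive.
Import Order.TTheory GRing.Theory.
Local Open Scope ring_scope.

(* Variables x_1,..,x_4 of the paper are 'X_0,..,'X_3 (0-based). *)
Definition xv (K : fieldType) (j : nat) : {mpoly K[4]} := 'X_(inord j).

(* Coefficient tensor c_{ijk} (0-based indices) of the relations
   g_i = sum_{j,k} c_{ijk} x_j x_k of the algebra A:
   g1 = x1x2 - x2x1, g2 = x2x3 - x3x2, g3 = x1x3 - x3x1,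
   g4 = x1x4 - x4x1 - x1^2 + x2x3, g5 = x2x4 - x4x2, g6 = x3x4 - x4x3. *)
Definition cA (K : fieldType) (i : 'I_6) (j k : 'I_4) : K :=
  match nat_of_ord i, nat_of_ord j, nat_of_ord k with
  | 0, 0, 1 => 1 | 0, 1, 0 => -1
  | 1, 1, 2 => 1 | 1, 2, 1 => -1
  | 2, 0, 2 => 1 | 2, 2, 0 => -1
  | 3, 0, 3 => 1 | 3, 3, 0 => -1 | 3, 0, 0 => -1 | 3, 1, 2 => 1
  | 4, 1, 3 => 1 | 4, 3, 1 => -1
  | 5, 2, 3 => 1 | 5, 3, 2 => -1
  | _, _, _ => 0
  end.

Definition Dmat (K : fieldType) (c : 'I_6 -> 'I_4 -> 'I_4 -> K)
  : 'M[{mpoly K[4]}]_(6, 4) :=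
  \matrix_(i < 6, k < 4) \sum_(j < 4) c i j k *: 'X_j.

Definition gen_ideal (R : comRingType) (G : R -> Prop) (p : R) : Prop :=
  exists (s a : seq R), (forall q, q \in s -> G q) /\ size a = size s /\
    p = \sum_(i < size s) a`_i * s`_i.

Definition minors4 (K : fieldType) (D : 'M[{mpoly K[4]}]_(6, 4))
  (q : {mpoly K[4]}) : Prop :=
  exists f : 'I_4 -> 'I_6, injective f /\ q = \det (rowsub f D).

(* Saturation (I : m^oo) w.r.t. the irrelevant ideal m = (x_1,..,x_4):
   p is in it iff m^N p is contained in I for some N. Two homogeneous ideals
   define the same closed subscheme of P^3 iff their saturations agree. *)
Definition saturation (K : fieldType) (I : {mpoly K[4]} -> Prop)
  (p : {mpoly K[4]}) : Prop :=
  exists N : nat, forall m : 'X_{1..4}, mdeg m = N -> I ('X_[m] * p).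

Definition point_scheme_ideal (K : fieldType)
  (c : 'I_6 -> 'I_4 -> 'I_4 -> K) : {mpoly K[4]} -> Prop :=
  gen_ideal (minors4 (Dmat c)).

Definition fQ (K : fieldType) : {mpoly K[4]} := xv K 0 ^+ 2 - xv K 1 * xv K 2.
Definition ideal_Q (K : fieldType) : {mpoly K[4]} -> Prop :=
  gen_ideal (fun q => q = fQ K).
Definition ideal_L (K : fieldType) : {mpoly K[4]} -> Prop :=
  gen_ideal (fun q => q = xv K 1 \/ q = xv K 2).
Definition ideal_QuL (K : fieldType) (p : {mpoly K[4]}) : Prop :=
  ideal_Q p /\ ideal_L p.

Definition ptL (K : fieldType) (s t : K) : 'I_4 -> K :=
  fun i => if nat_of_ord i == 0%N then s else if nat_of_ord i == 3%N then t else 0.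

From HB Require Import structures.
From mathcomp Require Import all_boot all_order all_algebra.
From mathcomp Require Import mpoly ring.
Import GRing.Theory.
Local Open Scope ring_scope.

(* Write f = x_1^2 - x_2 x_3.  The matrix D of the relations satisfies
   D x = -f e_4 for the column x of variables, so by Cramer's rule x_j times
   any 4x4 minor of D is a multiple of f.  On the line L the matrix D kills the
   column (x_1, 0, 0, x_1 + x_4), whose first entry is nonzero, so every minor
   vanishes on L, i.e. lies in (x_2, x_3).  Conversely, f restricts to x_1^2 on
   L, so (f) and (x_2, x_3) meet in (x_2 f, x_3 f), and each x_j x_2 f and
   x_j x_3 f is, up to sign, a 4x4 minor of D.  Thus the ideal of minors and
   the ideal of Q u L agree after multiplication by (x_1, ..., x_4), hence
   have the same saturation. *)

Section GenIdeal.
Variables (R : comNzRingType) (G : R -> Prop).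

Lemma gen_ideal_ind (J : R -> Prop) :
  J 0 -> (forall p q, J p -> J q -> J (p + q)) ->
  (forall r g, G g -> J (r * g)) -> forall p, gen_ideal G p -> J p.
Proof.
move=> J0 JD JM p [s [a [sG [size_a ->]]]].
elim: s a sG size_a => [|g s IHs] [|b a] //= sG; first by rewrite big_ord0.
move=> [size_a]; rewrite big_ord_recl; apply: JD.
  by apply/JM/sG; rewrite inE eqxx.
by apply: IHs => // q qs; apply: sG; rewrite inE qs orbT.
Qed.

Lemma gen_ideal0 : gen_ideal G 0.
Proof. by exists [::], [::]; rewrite big_ord0. Qed.

Lemma gen_ideal_gen g : G g -> gen_ideal G g.
Proof.
move=> Gg; exists [:: g], [:: 1]; split; first by move=> q /[!inE] /eqP ->.
by rewrite big_ord1 mul1r.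
Qed.

Lemma gen_idealM r p : gen_ideal G p -> gen_ideal G (r * p).
Proof.
move=> [s [a [sG [size_a ->]]]]; exists s, (map ( *%R r) a).
rewrite size_map mulr_sumr; do 2!split=> //.
by apply: eq_bigr => i _; rewrite (nth_map 0) ?size_a // mulrA.
Qed.

Lemma gen_idealD p q : gen_ideal G p -> gen_ideal G q -> gen_ideal G (p + q).
Proof.
move=> [s [a [sG [size_a ->]]]] [s' [a' [sG' [size_a' ->]]]].
exists (s ++ s'), (a ++ a'); split; first by move=> g /[!mem_cat] /orP[/sG|/sG'].
rewrite !size_cat size_a size_a' big_split_ord /=; split=> //.
congr (_ + _); apply: eq_bigr => i _; rewrite !nth_cat size_a.
  by rewrite ltn_ord.
by rewrite ltnNge leq_addr addKn.
Qed.

End GenIdeal.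

Lemma gen_ideal1P (R : comNzRingType) (g p : R) :
  gen_ideal (fun q => q = g) p <-> exists a, p = a * g.
Proof.
split; last by move=> [a ->]; apply: gen_idealM; exact: gen_ideal_gen.
move: p; apply: gen_ideal_ind => [|_ _ [a ->] [b ->]|r _ ->]; last by exists r.
  by exists 0; rewrite mul0r.
by exists (a + b); rewrite mulrDl.
Qed.

Lemma gen_ideal2P (R : comNzRingType) (g h p : R) :
  gen_ideal (fun q => q = g \/ q = h) p <-> exists a b, p = a * g + b * h.
Proof.
split=> [|[a [b ->]]]; last first.
  by apply: gen_idealD; apply: gen_idealM; apply: gen_ideal_gen; tauto.
move: p; apply: gen_ideal_ind => [|_ _ [a [b ->]] [c [d ->]]|r _ [->|->]].
- by exists 0, 0; rewrite !mul0r addr0.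
- by exists (a + c), (b + d); rewrite !mulrDl addrACA.
- by exists r, 0; rewrite mul0r addr0.
- by exists 0, r; rewrite mul0r add0r.
Qed.

Lemma cramer_mx (R : comNzRingType) n (A : 'M[R]_n) (v w : 'cV[R]_n) :
  A *m v = w -> \det A *: v = \adj A *m w.
Proof. by move=> <-; rewrite mulmxA mul_adj_mx mul_scalar_mx. Qed.

Lemma det_kernel_eq0 (R : idomainType) n (A : 'M[R]_n) (v : 'cV[R]_n) i :
  A *m v = 0 -> v i 0 != 0 -> \det A = 0.
Proof.
move=> /cramer_mx Av0 vi_neq0; have /matrixP/(_ i 0) := Av0.
by rewrite mulmx0 !mxE => /eqP; rewrite mulf_eq0 (negbTE vi_neq0) orbF => /eqP.
Qed.

Definition det4 {R : comNzRingType} (m : nat -> nat -> R) : R :=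
    m 0 0* m 1 1* m 2 2* m 3 3 - m 0 0* m 1 1* m 2 3* m 3 2 - m 0 0* m 1 2* m 2 1* m 3 3
  + m 0 0* m 1 2* m 2 3* m 3 1 + m 0 0* m 1 3* m 2 1* m 3 2 - m 0 0* m 1 3* m 2 2* m 3 1
  - m 0 1* m 1 0* m 2 2* m 3 3 + m 0 1* m 1 0* m 2 3* m 3 2 + m 0 1* m 1 2* m 2 0* m 3 3
  - m 0 1* m 1 2* m 2 3* m 3 0 - m 0 1* m 1 3* m 2 0* m 3 2 + m 0 1* m 1 3* m 2 2* m 3 0
  + m 0 2* m 1 0* m 2 1* m 3 3 - m 0 2* m 1 0* m 2 3* m 3 1 - m 0 2* m 1 1* m 2 0* m 3 3
  + m 0 2* m 1 1* m 2 3* m 3 0 + m 0 2* m 1 3* m 2 0* m 3 1 - m 0 2* m 1 3* m 2 1* m 3 0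
  - m 0 3* m 1 0* m 2 1* m 3 2 + m 0 3* m 1 0* m 2 2* m 3 1 + m 0 3* m 1 1* m 2 0* m 3 2
  - m 0 3* m 1 1* m 2 2* m 3 0 - m 0 3* m 1 2* m 2 0* m 3 1 + m 0 3* m 1 2* m 2 1* m 3 0.

Lemma det_mx44 (R : comNzRingType) (m : nat -> nat -> R) :
  \det (\matrix_(i < 4, j < 4) m i j) = det4 m.
Proof.
do 4!rewrite !(expand_det_row _ ord0) /cofactor !big_ord_recr !big_ord0 /=.
rewrite !det_mx00 !mxE /det4 /=; ring.
Qed.

Lemma mdegS_split n N (m : 'X_{1..n}) : mdeg m = N.+1 ->
  exists m1 (i : 'I_n), m = (m1 + U_(i))%MM /\ mdeg m1 = N.
Proof.
move=> degm; have [i mi] : exists i, m i != 0%N.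
  apply/existsP; apply: contraPT degm => /existsPn m0.
  by rewrite mdegE big1 // => i _; apply/eqP/negbNE/m0.
have {}mi : (U_(i) <= m)%MM by rewrite lep1mP.
exists (m - U_(i))%MM, i; rewrite submK //; split=> //.
by move: degm; rewrite -{1}(submK mi) mdegD mdeg1 addn1 => -[].
Qed.

Lemma saturation_mulX (K : fieldType) (I J : {mpoly K[4]} -> Prop) :
  (forall (i : 'I_4) p, I p -> J ('X_i * p)) ->
  forall p, saturation I p -> saturation J p.
Proof.
move=> IJ p [N IN]; exists N.+1 => m /mdegS_split [m1 [i [-> degm1]]].
by rewrite mpolyXD -mulrA mulrCA; apply/IJ/IN.
Qed.

Section PointScheme.
Variable K : fieldType.
Local Notation x j := (xv K j).
Local Notation D := (Dmat (@cA K)).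

Lemma mpolyX_xv (j : 'I_4) : 'X_j = x j.
Proof. by rewrite /xv inord_val. Qed.

Lemma xv_neq0 j : x j != 0.
Proof. by apply/eqP => /(congr1 (@msupp _ _)); rewrite msuppX msupp0. Qed.

Definition dA (i k : nat) : {mpoly K[4]} :=
  match i, k with
  | 0, 0 => - x 1 | 0, 1 => x 0
  | 1, 1 => - x 2 | 1, 2 => x 1
  | 2, 0 => - x 2 | 2, 2 => x 0
  | 3, 0 => - x 0 - x 3 | 3, 2 => x 1 | 3, 3 => x 0
  | 4, 1 => - x 3 | 4, 3 => x 1
  | 5, 2 => - x 3 | 5, 3 => x 2
  | _, _ => 0
  end.

Lemma DmatE (i : 'I_6) (k : 'I_4) : D i k = dA i k.
Proof.
rewrite mxE !big_ord_recr big_ord0 /= !mpolyX_xv.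
by case: i => [[|[|[|[|[|[|i]]]]]] ?] //; case: k => [[|[|[|[|k]]]] ?] //=;
  rewrite /cA /= ?scale0r ?scale1r ?scaleN1r; ring.
Qed.

Lemma Dmat_mulX : D *m (\col_j 'X_j) = - fQ K *: \col_i ((i == 3 :> nat)%:R).
Proof.
apply/matrixP => i j; rewrite !mxE !big_ord_recr big_ord0 /= !DmatE !mxE !mpolyX_xv.
by case: i => [[|[|[|[|[|[|i]]]]]] ?] //=; rewrite /fQ; ring.
Qed.

Lemma mulX_minor_in_Q (f : 'I_4 -> 'I_6) (j : 'I_4) :
  ideal_Q ('X_j * \det (rowsub f D)).
Proof.
set M := rowsub f D.
have rowsubZ (a : {mpoly K[4]}) (B : 'cV_6) : rowsub f (a *: B) = a *: rowsub f B.
  by apply/matrixP => ? ?; rewrite !mxE.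
have /cramer_mx/matrixP/(_ j 0) : M *m \col_j 'X_j = rowsub f (D *m \col_j 'X_j).
  exact: mul_rowsub_mx.
rewrite Dmat_mulX rowsubZ -scalemxAr !mxE mulrC => ->.
by apply/gen_ideal1P; eexists; rewrite mulNr -mulrN mulrC.
Qed.

Local Notation onL := (comp_mpoly [tuple x 0; 0; 0; x 3]).

Lemma onL_xE :
  (onL (x 0) = x 0) * (onL (x 1) = 0) * (onL (x 2) = 0) * (onL (x 3) = x 3).
Proof. by rewrite /xv !comp_mpolyXU !inordK. Qed.

Lemma onL_fQ : onL (fQ K) = x 0 ^+ 2.
Proof. by rewrite rmorphB !rmorphM /= ?onL_xE mulr0 subr0. Qed.

Lemma ideal_L_monomial_sub a b c d :
  ideal_L (x 0 ^+ a * x 1 ^+ b * x 2 ^+ c * x 3 ^+ d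
           - x 0 ^+ a * 0 ^+ b * 0 ^+ c * x 3 ^+ d).
Proof.
apply/gen_ideal2P; case: b => [|b]; last first.
  by exists (x 0 ^+ a * x 1 ^+ b * x 2 ^+ c * x 3 ^+ d), 0; rewrite !exprS; ring.
case: c => [|c]; first by exists 0, 0; rewrite subrr; ring.
by exists 0, (x 0 ^+ a * x 2 ^+ c * x 3 ^+ d); rewrite !exprS; ring.
Qed.

Lemma ideal_L_sub_onL p : ideal_L (p - onL p).
Proof.
elim/mpolyind: p => [|c m p _ _ IHp]; first by rewrite rmorph0 subr0; exact: gen_ideal0.
rewrite rmorphD /= comp_mpolyZ opprD addrACA -scalerBr -mul_mpolyC.
apply: gen_idealD => //; apply: gen_idealM.
rewrite comp_mpolyX {1}mpolyXE_id !big_ord_recr !big_ord0 /= !mpolyX_xv !mul1r.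
exact: ideal_L_monomial_sub.
Qed.

Lemma ideal_L_onL p : ideal_L p <-> onL p = 0.
Proof.
split; last by move=> onLp0; have := ideal_L_sub_onL p; rewrite onLp0 subr0.
by move=> /gen_ideal2P [a [b ->]]; rewrite rmorphD !rmorphM /= ?onL_xE !mulr0 addr0.
Qed.

Lemma ideal_QuL_gen q :
  ideal_QuL q -> exists b c, q = b * (x 1 * fQ K) + c * (x 2 * fQ K).
Proof.
move=> [/gen_ideal1P [a ->] /ideal_L_onL]; rewrite rmorphM /= onL_fQ => /eqP.
rewrite mulf_eq0 expf_eq0 (negbTE (xv_neq0 0)) andbF orbF => /eqP /ideal_L_onL.
by move=> /gen_ideal2P [b [c ->]]; exists b, c; ring.
Qed.

Lemma Dmat_onL_kernel :
  map_mx onL D *m \col_(i < 4) [:: x 0; 0; 0; x 0 + x 3]`_i = 0.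
Proof.
apply/matrixP => i j; rewrite !mxE.
under eq_bigr => k _ do rewrite mxE DmatE mxE.
rewrite !big_ord_recr big_ord0 /=.
by case: i => [[|[|[|[|[|[|i]]]]]] ?] //=;
  rewrite ?(comp_mpolyN, comp_mpolyB, comp_mpoly0) ?onL_xE; ring.
Qed.

Lemma minor_in_L (f : 'I_4 -> 'I_6) : ideal_L (\det (rowsub f D)).
Proof.
apply/ideal_L_onL; rewrite -det_map_mx.
have -> : map_mx onL (rowsub f D) = rowsub f (map_mx onL D).
  by apply/matrixP => ? ?; rewrite !mxE.
apply: (@det_kernel_eq0 _ _ _ (\col_i [:: x 0; 0; 0; x 0 + x 3]`_i) 0).
  by rewrite mul_rowsub_mx Dmat_onL_kernel; apply/matrixP => ? ?; rewrite !mxE.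
by rewrite mxE xv_neq0.
Qed.

Lemma mulX_point_scheme_in_QuL (i : 'I_4) q :
  point_scheme_ideal (@cA K) q -> ideal_QuL ('X_i * q).
Proof.
move: q; apply: gen_ideal_ind.
- by rewrite mulr0; split; exact: gen_ideal0.
- by move=> p q [Qp Lp] [Qq Lq]; rewrite mulrDr; split; apply: gen_idealD.
- move=> r _ [f [_ ->]]; rewrite mulrCA.
  split; apply: gen_idealM; first exact: mulX_minor_in_Q.
  by apply: gen_idealM; exact: minor_in_L.
Qed.

Lemma point_scheme_minor (r : seq nat) (s q : {mpoly K[4]}) :
  [&& uniq r, size r == 4 & all (fun k => k < 6) r]%N ->
  q = s * det4 (fun a b => dA (nth 0 r a) b) ->
  point_scheme_ideal (@cA K) q.
Proof.
move=> /and3P [r_uniq /eqP r_size r_lt6] ->; rewrite -det_mx44.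
apply/gen_idealM/gen_ideal_gen.
have rowE (i : 'I_4) : val (inord (nth 0 r i) : 'I_6) = nth 0 r i.
  by rewrite /= inordK //; apply: (allP r_lt6); rewrite mem_nth ?r_size.
exists (fun i => inord (nth 0 r i)); split.
  move=> i j /(congr1 val); rewrite !rowE => /eqP.
  by rewrite nth_uniq ?r_size // => /eqP /val_inj.
by congr (\det _); apply/matrixP => i k; rewrite [LHS]mxE [RHS]mxE DmatE rowE.
Qed.

Lemma mulX_QuL_in_point_scheme (i : 'I_4) q :
  ideal_QuL q -> point_scheme_ideal (@cA K) ('X_i * q).
Proof.
move=> /ideal_QuL_gen [b [c ->]].
suff [x1fQ x2fQ] : point_scheme_ideal (@cA K) ('X_i * (x 1 * fQ K)) /\
                   point_scheme_ideal (@cA K) ('X_i * (x 2 * fQ K)).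
  by rewrite mulrDr (mulrCA _ b) (mulrCA _ c); apply: gen_idealD; apply: gen_idealM.
rewrite mpolyX_xv; case: i => [[|[|[|[|i]]]] ?] //=; split.
- by apply: (point_scheme_minor [:: 0; 2; 3; 4]%N (-1)); rewrite // /det4 /fQ /=; ring.
- by apply: (point_scheme_minor [:: 0; 2; 3; 5]%N (-1)); rewrite // /det4 /fQ /=; ring.
- by apply: (point_scheme_minor [:: 0; 1; 3; 4]%N (-1)); rewrite // /det4 /fQ /=; ring.
- by apply: (point_scheme_minor [:: 0; 1; 3; 5]%N (-1)); rewrite // /det4 /fQ /=; ring.
- by apply: (point_scheme_minor [:: 0; 1; 3; 5]%N (-1)); rewrite // /det4 /fQ /=; ring.
- by apply: (point_scheme_minor [:: 1; 2; 3; 5]%N 1); rewrite // /det4 /fQ /=; ring.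
- by apply: (point_scheme_minor [:: 0; 3; 4; 5]%N 1); rewrite // /det4 /fQ /=; ring.
- by apply: (point_scheme_minor [:: 2; 3; 4; 5]%N 1); rewrite // /det4 /fQ /=; ring.
Qed.

End PointScheme.

Section PointL.
Variables (K : fieldType) (s t : K).

Lemma ptL_xE : ((xv K 0).@[ptL s t] = s) * ((xv K 1).@[ptL s t] = 0) *
  ((xv K 2).@[ptL s t] = 0).
Proof. by rewrite /xv !mevalXU /ptL !inordK. Qed.

Lemma fQ_ptL : (fQ K).@[ptL s t] = s ^+ 2.
Proof. by rewrite /fQ rmorphB rmorphXn rmorphM /= !ptL_xE mulr0 subr0. Qed.

End PointL.

Lemma mderiv_fQ_ptL01 (K : fieldType) (i : 'I_4) :
  (mderiv i (fQ K)).@[ptL 0 1] = 0.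
Proof.
rewrite /fQ expr2 mderivB !mderivM rmorphB !rmorphD !rmorphM /= !ptL_xE.
by rewrite !mulr0 !mul0r !addr0 subr0.
Qed.

Theorem proposition5 (K : closedFieldType) (hK : (2 \notin [pchar K])%N) :
  (* point scheme of A equals Q u L as subschemes of P^3 *)
  (forall p : {mpoly K[4]},
     saturation (point_scheme_ideal (@cA K)) p <-> saturation (@ideal_QuL K) p)
  /\
  (* e4 = (0:0:0:1) lies on L and is a singular point of Q *)
  ((xv K 1).@[ptL 0 1] = 0 /\ (xv K 2).@[ptL 0 1] = 0 /\
   (fQ K).@[ptL 0 1] = 0 /\
   (forall i : 'I_4, (mderiv i (fQ K)).@[ptL 0 1] = 0))
  /\
  (* L is tangent to Q there: Q restricted to L is s^2 (double point at e4) *)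
  (forall s t : K, (fQ K).@[ptL s t] = s ^+ 2).
Proof.
split; last split; last exact: fQ_ptL.
  move=> p; split; apply: saturation_mulX => i q.
    exact: mulX_point_scheme_in_QuL.
  exact: mulX_QuL_in_point_scheme.
rewrite !ptL_xE fQ_ptL expr2 mulr0.
by do 3!split=> //; exact: mderiv_fQ_ptL01.
Qed.
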